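(* The $2$-dimensional Fine $\mathbb{Q}$-codegree spectrum is $$S^F(2)=\left\{\tfrac{2}{k}\;\middle|\;k\in\mathbb{Z}_{>0}\right\}\cup\left\{\tfrac{3}{k}\;\middle|\;k\in\mathbb{Z}_{>0}\right\}.$$
   Context: For a $d$-dimensional rational polytope $P\subseteq\mathbb{R}^d$ and $a\in(\mathbb{Z}^d)^*$ let $h_P(a)=\min_{x\in P}\langle a,x\rangle$. For $s>0$ the Fine adjoint polytope is $P^{F(s)}=\{x\in\mathbb{R}^d : \langle a,x\rangle\ge h_P(a)+s \text{ for all } a\in(\mathbb{Z}^d)^*\setminus\{0\}\}$. The Fine $\mathbb{Q}$-codegree is $\mu^F(P)=(\sup\{s>0 : P^{F(s)}\neq\emptyset\})^{-1}$. The Fine spectrum in dimension $d$ is $S^F(d)=\{\mu^F(P) : P \text{ a } d\text{-dimensional lattice polytope}\}$, lattice polytopes being those with vertices in $\mathbb{Z}^d$. *)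

From Stdlib Require Import Reals Lra ZArith List.
Open Scope R_scope.

(* Points of R^2 and of the lattice Z^2 (the dual lattice (Z^2)^* is
   identified with Z^2 via the standard pairing). *)
Definition pt := (R * R)%type.
Definition lpt := (Z * Z)%type.

Definition to_pt (v : lpt) : pt := (IZR (fst v), IZR (snd v)).

Definition pairing (a : lpt) (x : pt) : R :=
  IZR (fst a) * fst x + IZR (snd a) * snd x.

Definition conv (V : list lpt) (x : pt) : Prop :=
  exists c : list (lpt * R),
    Forall (fun p => In (fst p) V /\ 0 <= snd p) c /\
    fold_right (fun p acc => snd p + acc) 0 c = 1 /\
    x = fold_right (fun p acc =>
          (snd p * IZR (fst (fst p)) + fst acc,
           snd p * IZR (snd (fst p)) + snd acc)) (0, 0) c.

(* conv V is 2-dimensional: V contains three affinely independent points. *)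
Definition full_dim2 (V : list lpt) : Prop :=
  exists p q r, In p V /\ In q V /\ In r V /\
    ((fst q - fst p) * (snd r - snd p) - (snd q - snd p) * (fst r - fst p))%Z
      <> 0%Z.

(* h_P(a) = min_{x in P} <a,x> (stated relationally: h is the minimum). *)
Definition is_hP (P : pt -> Prop) (a : lpt) (h : R) : Prop :=
  (exists y, P y /\ pairing a y = h) /\ (forall y, P y -> h <= pairing a y).

Definition fine_adjoint (P : pt -> Prop) (s : R) (x : pt) : Prop :=
  forall a : lpt, a <> (0%Z, 0%Z) ->
    forall h, is_hP P a h -> pairing a x >= h + s.

Definition fine_codegree (P : pt -> Prop) (mu : R) : Prop :=
  exists sigma,
    is_lub (fun s => 0 < s /\ exists x, fine_adjoint P s x) sigma /\
    mu = / sigma.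

Definition fine_spectrum2 (mu : R) : Prop :=
  exists V : list lpt, full_dim2 V /\ fine_codegree (conv V) mu.

From Stdlib Require Import Reals Lra Lia ZArith List Wf_nat Classical_Prop.
Open Scope R_scope.

(** Write [slack a x = <a, x> - h_P(a)]. The slacks of [b] and [-b] sum to the lattice width
    of [P] in direction [b], and for [det a1 a2 <> 0] those of [a1], [a2], [-a1-a2] sum to
    [t = -h(a1) - h(a2) - h(-a1-a2)]; so [P^{F(s)}] nonempty forces [6 s <= K], where [K] is
    the least of all the integers [3 width] and [2 t].
    Conversely, for every positively dependent triple [b1, b2, b3] the [det]-weighted mean of
    the three slacks is at least [K / 6]. This goes by induction on the total weight: a
    lattice point of the fundamental parallelogram of the pair with [det >= 2] replaces one
    of its vectors, down to degenerate triples (bounded by a width) and unimodular ones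
    (bounded by a [t]). It yields a point of [P^{F(K/6)}]: the common point of the three
    tight lines when [K = 2 t], and a point of the midline between the two tight lines when
    [K = 3 width], whose position on that line the remaining directions constrain
    compatibly. Hence [mu^F(P) = 6 / K], i.e. [2 / width] or [3 / t]; the square and the
    standard triangle of side [k] attain [2 / k] and [3 / k]. *)

Section LatticeCombinatorics.
Local Open Scope Z_scope.

Definition dot (a u : lpt) : Z := fst a * fst u + snd a * snd u.
Definition det (a b : lpt) : Z := fst a * snd b - snd a * fst b.
Definition vopp (a : lpt) : lpt := (- fst a, - snd a).
Definition vadd (a b : lpt) : lpt := (fst a + fst b, snd a + snd b).
Definition perp (b : lpt) : lpt := (- snd b, fst b).

Lemma det_swap a b : det a b = - det b a.
Proof. unfold det; ring. Qed.

Lemma det_vv a : det a a = 0.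
Proof. unfold det; ring. Qed.

Lemma det_nz_l a b : det a b <> 0 -> a <> (0, 0).
Proof. intros H ->; apply H; unfold det; simpl; ring. Qed.

Lemma det_nz_r a b : det a b <> 0 -> b <> (0, 0).
Proof. intros H ->; apply H; unfold det; simpl; ring. Qed.

Lemma vopp_nz b : b <> (0, 0) -> vopp b <> (0, 0).
Proof.
  destruct b as [x y]; unfold vopp; simpl; intros H E; injection E; intros.
  apply H; f_equal; lia.
Qed.

Lemma vopp_vadd_nz a b : det a b <> 0 -> vopp (vadd a b) <> (0, 0).
Proof.
  destruct a as [x1 y1], b as [x2 y2]; unfold vopp, vadd, det; simpl.
  intros H E; injection E; intros; apply H; nia.
Qed.

Lemma dot_perp a b : dot a (perp b) = det b a.
Proof. unfold dot, det, perp; cbn [fst snd]; ring. Qed.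

Lemma det_perp_l b : det b (perp b) = dot b b.
Proof. unfold dot, det, perp; cbn [fst snd]; ring. Qed.

Lemma det_perp_r b a : det (perp b) a = - dot b a.
Proof. unfold dot, det, perp; cbn [fst snd]; ring. Qed.

Lemma det_vopp_l a b : det (vopp a) b = - det a b.
Proof. unfold det, vopp; cbn [fst snd]; ring. Qed.

Lemma dot_vopp_l a b : dot (vopp a) b = - dot a b.
Proof. unfold dot, vopp; cbn [fst snd]; ring. Qed.

Lemma dot_self_pos b : b <> (0, 0) -> 0 < dot b b.
Proof.
  destruct b as [x y]; unfold dot; cbn [fst snd]; intros Hb.
  destruct (Z.eq_dec x 0), (Z.eq_dec y 0); subst; [easy | nia ..].
Qed.

Lemma perp_nz b : b <> (0, 0) -> perp b <> (0, 0).
Proof. intros Hb; apply (det_nz_r b); rewrite det_perp_l; pose proof (dot_self_pos b Hb); lia. Qed.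

Lemma cramer_fst b1 b2 b3 :
  det b2 b3 * fst b1 + det b3 b1 * fst b2 + det b1 b2 * fst b3 = 0.
Proof. unfold det; ring. Qed.

Lemma cramer_snd b1 b2 b3 :
  det b2 b3 * snd b1 + det b3 b1 * snd b2 + det b1 b2 * snd b3 = 0.
Proof. unfold det; ring. Qed.

Lemma scaled_zero (d : Z) (b : lpt) :
  0 < d -> d * fst b = 0 -> d * snd b = 0 -> b = (0, 0).
Proof. destruct b as [x y]; simpl; intros; f_equal; nia. Qed.

Definition lincomb3 (m : Z) (p : lpt) (u1 : Z) (c1 : lpt) (u2 : Z) (c2 : lpt)
    (u3 : Z) (c3 : lpt) : Prop :=
  m * fst p = u1 * fst c1 + u2 * fst c2 + u3 * fst c3 /\
  m * snd p = u1 * snd c1 + u2 * snd c2 + u3 * snd c3.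

Lemma dot_lincomb3 m p u1 c1 u2 c2 u3 c3 v : lincomb3 m p u1 c1 u2 c2 u3 c3 ->
  m * dot p v = u1 * dot c1 v + u2 * dot c2 v + u3 * dot c3 v.
Proof.
  intros [E1 E2].
  transitivity ((m * fst p) * fst v + (m * snd p) * snd v); [unfold dot; ring|].
  rewrite E1, E2; unfold dot; ring.
Qed.

Lemma det_lincomb3_l m p u1 c1 u2 c2 u3 c3 c : lincomb3 m p u1 c1 u2 c2 u3 c3 ->
  m * det c p = u1 * det c c1 + u2 * det c c2 + u3 * det c c3.
Proof.
  intros [E1 E2].
  transitivity (fst c * (m * snd p) - snd c * (m * fst p)); [unfold det; ring|].
  rewrite E1, E2; unfold det; ring.
Qed.

Lemma det_lincomb3_r m p u1 c1 u2 c2 u3 c3 c : lincomb3 m p u1 c1 u2 c2 u3 c3 ->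
  m * det p c = u1 * det c1 c + u2 * det c2 c + u3 * det c3 c.
Proof.
  intros [E1 E2].
  transitivity ((m * fst p) * snd c - (m * snd p) * fst c); [unfold det; ring|].
  rewrite E1, E2; unfold det; ring.
Qed.

(** [h_P(a)] for [P = conv V]; the value [0] for [V = nil] is junk. *)
Definition support (V : list lpt) (a : lpt) : Z :=
  match V with
  | nil => 0
  | u :: l => fold_right (fun v m => Z.min (dot a v) m) (dot a u) l
  end.

Lemma support_le V a u : In u V -> support V a <= dot a u.
Proof.
  destruct V as [|w l]; [easy|]; simpl.
  assert (Hw : fold_right (fun v m => Z.min (dot a v) m) (dot a w) l <= dot a w)
    by (induction l; simpl; lia).
  intros [<-|Hu]; [exact Hw|]; clear Hw.
  induction l as [|v l IH]; simpl in *; [easy|].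
  destruct Hu as [<-|Hu]; [lia|]; specialize (IH Hu); lia.
Qed.

Lemma support_attained V a : V <> nil -> exists u, In u V /\ support V a = dot a u.
Proof.
  destruct V as [|w l]; [easy|]; intros _; simpl.
  induction l as [|v l [u [Hu E]]]; simpl; [eauto|].
  destruct (Z.min_spec (dot a v) (fold_right (fun v m => Z.min (dot a v) m) (dot a w) l))
    as [[_ ->]|[_ ->]]; [eauto|].
  exists u; split; [simpl in *; tauto | exact E].
Qed.

Lemma support_lincomb3 V m p u1 c1 u2 c2 u3 c3 :
  V <> nil -> 0 <= u1 -> 0 <= u2 -> 0 <= u3 -> lincomb3 m p u1 c1 u2 c2 u3 c3 ->
  u1 * support V c1 + u2 * support V c2 + u3 * support V c3 <= m * support V p.
Proof.
  intros HV H1 H2 H3 Hp; destruct (support_attained V p HV) as [u [Hu ->]].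
  rewrite (dot_lincomb3 _ _ _ _ _ _ _ _ u Hp).
  pose proof (support_le V c1 u Hu); pose proof (support_le V c2 u Hu);
    pose proof (support_le V c3 u Hu).
  nia.
Qed.

Definition width (V : list lpt) (b : lpt) : Z := - support V b - support V (vopp b).

Definition tri_width (V : list lpt) (a1 a2 : lpt) : Z :=
  - support V a1 - support V a2 - support V (vopp (vadd a1 a2)).

Definition obstruction (V : list lpt) (K : Z) : Prop :=
  (exists b, b <> (0, 0) /\ K = 3 * width V b) \/
  (exists a1 a2, det a1 a2 <> 0 /\ K = 2 * tri_width V a1 a2).

Definition least_obstruction (V : list lpt) (K : Z) : Prop :=
  obstruction V K /\ forall K', obstruction V K' -> K <= K'.

Lemma width_ge V b u : In u V -> dot b u - support V b <= width V b.
Proof.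
  intros Hu; pose proof (support_le V (vopp b) u Hu); unfold width.
  unfold dot, vopp in *; cbn [fst snd] in *; lia.
Qed.

Lemma tri_width_ge V a1 a2 u : In u V -> dot a1 u - support V a1 <= tri_width V a1 a2.
Proof.
  intros Hu; pose proof (support_le V a2 u Hu);
    pose proof (support_le V (vopp (vadd a1 a2)) u Hu); unfold tri_width.
  unfold dot, vopp, vadd in *; cbn [fst snd] in *; lia.
Qed.

Lemma width_nonneg V b : V <> nil -> 0 <= width V b.
Proof.
  destruct V as [|u l]; [easy|]; intros _.
  pose proof (support_le (u :: l) b u (or_introl eq_refl)).
  pose proof (width_ge (u :: l) b u (or_introl eq_refl)); lia.
Qed.

Lemma obstruction_nonneg V K : V <> nil -> obstruction V K -> 0 <= K.
Proof.
  destruct V as [|u l]; [easy|]; intros _.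
  assert (Hu : In u (u :: l)) by now left.
  intros [[b [_ ->]]|[a1 [a2 [_ ->]]]].
  - apply Z.mul_nonneg_nonneg; [lia | apply width_nonneg; discriminate].
  - pose proof (support_le _ a1 u Hu); pose proof (tri_width_ge _ a1 a2 u Hu); lia.
Qed.

Lemma full_dim2_nonempty V : full_dim2 V -> V <> nil.
Proof. intros [p [_ [_ [Hp _]]]] ->; inversion Hp. Qed.

Lemma full_dim2_dot_const V c m :
  full_dim2 V -> (forall u, In u V -> dot c u = m) -> c = (0, 0).
Proof.
  intros [p [q [r [Hp [Hq [Hr Hd]]]]]] H.
  pose proof (H p Hp); pose proof (H q Hq); pose proof (H r Hr).
  destruct c as [c1 c2]; unfold dot in *; simpl in *.
  assert (E1 : c1 * (fst q - fst p) + c2 * (snd q - snd p) = 0) by lia.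
  assert (E2 : c1 * (fst r - fst p) + c2 * (snd r - snd p) = 0) by lia.
  set (D := ((fst q - fst p) * (snd r - snd p) - (snd q - snd p) * (fst r - fst p))) in Hd.
  assert (F1 : c1 * D = 0).
  { transitivity ((snd r - snd p) * (c1 * (fst q - fst p) + c2 * (snd q - snd p))
                  - (snd q - snd p) * (c1 * (fst r - fst p) + c2 * (snd r - snd p)));
      [unfold D; ring | rewrite E1, E2; ring]. }
  assert (F2 : c2 * D = 0).
  { transitivity ((fst q - fst p) * (c1 * (fst r - fst p) + c2 * (snd r - snd p))
                  - (fst r - fst p) * (c1 * (fst q - fst p) + c2 * (snd q - snd p)));
      [unfold D; ring | rewrite E1, E2; ring]. }
  apply Z.mul_eq_0 in F1, F2; f_equal; tauto.
Qed.

Lemma obstruction_pos V K : full_dim2 V -> obstruction V K -> 1 <= K.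
Proof.
  intros HF HK; pose proof (full_dim2_nonempty V HF) as HV.
  pose proof (obstruction_nonneg V K HV HK).
  destruct (Z.eq_dec K 0) as [->|]; [exfalso|lia].
  destruct HK as [[b [Hb EK]]|[a1 [a2 [Hd EK]]]].
  - apply Hb, (full_dim2_dot_const V b (support V b) HF); intros u Hu.
    pose proof (support_le V b u Hu); pose proof (width_ge V b u Hu); lia.
  - apply (det_nz_l _ _ Hd), (full_dim2_dot_const V a1 (support V a1) HF); intros u Hu.
    pose proof (support_le V a1 u Hu); pose proof (tri_width_ge V a1 a2 u Hu); lia.
Qed.

Lemma least_obstruction_exists V : full_dim2 V -> exists K, least_obstruction V K.
Proof.
  intros HF; pose proof (full_dim2_nonempty V HF) as HV.
  destruct (dec_inh_nat_subset_has_unique_least_element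
              (fun n => obstruction V (Z.of_nat n))) as [n [[Hn Hmin] _]].
  - intros n; apply classic.
  - assert (H10 : obstruction V (3 * width V (1, 0)))
      by (left; exists (1, 0); split; [discriminate | reflexivity]).
    exists (Z.to_nat (3 * width V (1, 0))).
    rewrite Z2Nat.id by exact (obstruction_nonneg V _ HV H10); exact H10.
  - exists (Z.of_nat n); split; [exact Hn|].
    intros K HK; pose proof (obstruction_nonneg V K HV HK).
    specialize (Hmin (Z.to_nat K)); rewrite Z2Nat.id in Hmin by lia.
    specialize (Hmin HK); lia.
Qed.

Definition tri_weight (b1 b2 b3 : lpt) : Z := det b2 b3 + det b3 b1 + det b1 b2.

(** By [cramer_fst], [cramer_snd], [det b2 b3 * b1 + det b3 b1 * b2 + det b1 b2 * b3 = 0]: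
    a positive triple is a nonnegative relation with positive total weight. *)
Definition pos_triple (b1 b2 b3 : lpt) : Prop :=
  b1 <> (0, 0) /\ b2 <> (0, 0) /\ b3 <> (0, 0) /\
  0 <= det b2 b3 /\ 0 <= det b3 b1 /\ 0 <= det b1 b2 /\ 0 < tri_weight b1 b2 b3.

Definition tri_value (V : list lpt) (b1 b2 b3 : lpt) : Z :=
  - (det b2 b3 * support V b1 + det b3 b1 * support V b2 + det b1 b2 * support V b3).

(** [tri_value] is the weighted sum of the slacks [<b_i, x> - h(b_i)] at any [x], so this
    says that their weighted mean is at least [K / 6]. *)
Definition triple_bound (V : list lpt) (b1 b2 b3 : lpt) : Prop :=
  exists K, obstruction V K /\ K * tri_weight b1 b2 b3 <= 6 * tri_value V b1 b2 b3.

Lemma tri_weight_rot b1 b2 b3 : tri_weight b2 b3 b1 = tri_weight b1 b2 b3.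
Proof. unfold tri_weight; ring. Qed.

Lemma pos_triple_rot b1 b2 b3 : pos_triple b1 b2 b3 -> pos_triple b2 b3 b1.
Proof. unfold pos_triple; rewrite (tri_weight_rot b1 b2 b3); tauto. Qed.

Lemma triple_bound_rot V b1 b2 b3 : triple_bound V b2 b3 b1 -> triple_bound V b1 b2 b3.
Proof.
  intros [K [HK HKb]]; exists K; split; [exact HK|].
  rewrite <- (tri_weight_rot b1 b2 b3); unfold tri_value in *; lia.
Qed.

(** Superadditivity of [h] along [d (-b) = e b'] gives [e h(b') <= d h(-b)]. *)
Lemma width_bound_pair V b b' d e :
  V <> nil -> 0 < e <= d -> d * fst b + e * fst b' = 0 -> d * snd b + e * snd b' = 0 ->
  3 * width V b * (d + e) <= 6 * (- (d * support V b) - e * support V b').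
Proof.
  intros HV He E1 E2.
  assert (Hb' : lincomb3 d (vopp b) e b' 0 b' 0 b') by (unfold vopp; split; cbn; lia).
  pose proof (support_lincomb3 V d (vopp b) e b' 0 b' 0 b' HV ltac:(lia) ltac:(lia) ltac:(lia) Hb').
  pose proof (width_nonneg V b HV).
  assert (width V b * (d + e) <= width V b * (2 * d)) by (apply Z.mul_le_mono_nonneg_l; lia).
  unfold width in *; lia.
Qed.

Lemma triple_bound_degenerate V b1 b2 b3 :
  V <> nil -> pos_triple b1 b2 b3 -> det b2 b3 = 0 -> triple_bound V b1 b2 b3.
Proof.
  intros HV [_ [Hb2 [Hb3 [_ [D2 [D3 Hw]]]]]] D1.
  pose proof (cramer_fst b1 b2 b3) as C1; pose proof (cramer_snd b1 b2 b3) as C2.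
  rewrite D1 in C1, C2; unfold tri_weight in Hw; rewrite D1 in Hw.
  assert (P2 : 0 < det b3 b1).
  { destruct (Z.eq_dec (det b3 b1) 0) as [E|]; [exfalso|lia].
    rewrite E in C1, C2; apply Hb3, (scaled_zero (det b1 b2)); lia. }
  assert (P3 : 0 < det b1 b2).
  { destruct (Z.eq_dec (det b1 b2) 0) as [E|]; [exfalso|lia].
    rewrite E in C1, C2; apply Hb2, (scaled_zero (det b3 b1)); lia. }
  unfold triple_bound, tri_weight, tri_value; rewrite D1.
  destruct (Z.le_gt_cases (det b1 b2) (det b3 b1)).
  - exists (3 * width V b2); split; [left; exists b2; auto|].
    pose proof (width_bound_pair V b2 b3 (det b3 b1) (det b1 b2) HV); lia.
  - exists (3 * width V b3); split; [left; exists b3; auto|].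
    pose proof (width_bound_pair V b3 b2 (det b1 b2) (det b3 b1) HV); lia.
Qed.

Lemma triple_bound_unimodular V b1 b2 b3 :
  det b2 b3 = 1 -> det b3 b1 = 1 -> det b1 b2 = 1 -> triple_bound V b1 b2 b3.
Proof.
  intros D1 D2 D3.
  pose proof (cramer_fst b1 b2 b3) as C1; pose proof (cramer_snd b1 b2 b3) as C2.
  rewrite D1, D2, D3 in C1, C2.
  assert (Hb3 : b3 = vopp (vadd b1 b2)).
  { destruct b3 as [x y]; unfold vopp, vadd; cbn [fst snd] in *; f_equal; lia. }
  exists (2 * tri_width V b1 b2); split.
  - right; exists b1, b2; split; [lia | reflexivity].
  - unfold tri_weight, tri_value, tri_width; rewrite D1, D2, D3, <- Hb3; lia.
Qed.

Lemma tri_weight_lincomb3 m p u1 c1 u2 c2 u3 c3 : lincomb3 m p u1 c1 u2 c2 u3 c3 ->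
  m * tri_weight c1 c2 p = u3 * tri_weight c1 c2 c3 + (m - u1 - u2 - u3) * det c1 c2.
Proof.
  intros Hp; unfold tri_weight.
  pose proof (det_lincomb3_l _ _ _ _ _ _ _ _ c2 Hp).
  pose proof (det_lincomb3_r _ _ _ _ _ _ _ _ c1 Hp).
  rewrite (det_swap c2 c1), det_vv in *; lia.
Qed.

Lemma tri_value_lincomb3 V m p u1 c1 u2 c2 u3 c3 :
  V <> nil -> 0 <= u1 -> 0 <= u2 -> 0 <= u3 -> 0 <= det c1 c2 ->
  lincomb3 m p u1 c1 u2 c2 u3 c3 ->
  m * tri_value V c1 c2 p <= u3 * tri_value V c1 c2 c3.
Proof.
  intros HV H1 H2 H3 D3 Hp; unfold tri_value.
  pose proof (det_lincomb3_l _ _ _ _ _ _ _ _ c2 Hp) as E1.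
  pose proof (det_lincomb3_r _ _ _ _ _ _ _ _ c1 Hp) as E2.
  rewrite (det_swap c2 c1), det_vv in E1, E2.
  pose proof (support_lincomb3 V _ _ _ _ _ _ _ _ HV H1 H2 H3 Hp).
  assert (det c1 c2 * (u1 * support V c1 + u2 * support V c2 + u3 * support V c3)
          <= det c1 c2 * (m * support V p)) by (apply Z.mul_le_mono_nonneg_l; lia).
  replace (m * _) with (- ((m * det c2 p) * support V c1 + (m * det p c1) * support V c2
                           + det c1 c2 * (m * support V p))) by ring.
  rewrite E1, E2; lia.
Qed.

(** Replacing [c3] by [p] multiplies the weight by at least [u3 / m] and the value by at
    most [u3 / m]. *)
Lemma triple_bound_replace V c1 c2 c3 p m u1 u2 u3 :
  V <> nil -> lincomb3 m p u1 c1 u2 c2 u3 c3 ->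
  0 <= u1 -> 0 <= u2 -> 0 < u3 -> u1 + u2 + u3 <= m -> 0 <= det c1 c2 ->
  triple_bound V c1 c2 p -> triple_bound V c1 c2 c3.
Proof.
  intros HV Hp H1 H2 H3 Hm D3 [K [HK HKb]]; exists K; split; [exact HK|].
  pose proof (obstruction_nonneg V K HV HK).
  pose proof (tri_weight_lincomb3 _ _ _ _ _ _ _ _ Hp) as EW.
  pose proof (tri_value_lincomb3 V m p u1 c1 u2 c2 u3 c3 HV H1 H2 ltac:(lia) D3 Hp).
  apply (Z.mul_le_mono_pos_l _ _ u3 H3).
  assert (K * (u3 * tri_weight c1 c2 c3) <= K * (m * tri_weight c1 c2 p)).
  { apply Z.mul_le_mono_nonneg_l; [lia|]; rewrite EW.
    assert (0 <= (m - u1 - u2 - u3) * det c1 c2) by (apply Z.mul_nonneg_nonneg; lia); lia. }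
  assert (m * (K * tri_weight c1 c2 p) <= m * (6 * tri_value V c1 c2 p))
    by (apply Z.mul_le_mono_nonneg_l; lia).
  lia.
Qed.

Lemma lattice_reduce b1 b2 e : 0 < det b1 b2 -> exists p,
  det b1 b2 * fst p = det e b2 mod det b1 b2 * fst b1 + det b1 e mod det b1 b2 * fst b2 /\
  det b1 b2 * snd p = det e b2 mod det b1 b2 * snd b1 + det b1 e mod det b1 b2 * snd b2.
Proof.
  intros Hd; set (d := det b1 b2) in *.
  pose proof (Z.div_mod (det e b2) d ltac:(lia)) as A.
  pose proof (Z.div_mod (det b1 e) d ltac:(lia)) as B.
  exists (fst e - det e b2 / d * fst b1 - det b1 e / d * fst b2,
          snd e - det e b2 / d * snd b1 - det b1 e / d * snd b2); cbn [fst snd].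
  assert (E1 : d * fst e = det e b2 * fst b1 + det b1 e * fst b2) by (unfold d, det; ring).
  assert (E2 : d * snd e = det e b2 * snd b1 + det b1 e * snd b2) by (unfold d, det; ring).
  split; nia.
Qed.

(** Otherwise both unit vectors lie in the lattice spanned by [b1, b2], whose index
    [det b1 b2] would then divide [1]. *)
Lemma unit_vector_off_lattice b1 b2 :
  2 <= det b1 b2 -> exists e, 0 < det e b2 mod det b1 b2 + det b1 e mod det b1 b2.
Proof.
  intros Hd; set (d := det b1 b2) in *.
  destruct (Z_lt_le_dec 0 (det (1, 0) b2 mod d + det b1 (1, 0) mod d)) as [H10|H10];
    [eauto|].
  destruct (Z_lt_le_dec 0 (det (0, 1) b2 mod d + det b1 (0, 1) mod d)) as [H01|H01];
    [eauto|].
  exfalso.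
  pose proof (fun e => Z.mod_pos_bound (det e b2) d ltac:(lia)) as R1.
  pose proof (fun e => Z.mod_pos_bound (det b1 e) d ltac:(lia)) as R2.
  pose proof (R1 (1, 0)); pose proof (R2 (1, 0)); pose proof (R1 (0, 1));
    pose proof (R2 (0, 1)); clear R1 R2.
  replace (det (1, 0) b2) with (snd b2) in * by (unfold det; cbn [fst snd]; ring).
  replace (det b1 (1, 0)) with (- snd b1) in * by (unfold det; cbn [fst snd]; ring).
  replace (det (0, 1) b2) with (- fst b2) in * by (unfold det; cbn [fst snd]; ring).
  replace (det b1 (0, 1)) with (fst b1) in * by (unfold det; cbn [fst snd]; ring).
  assert (Hdiv : forall z, z mod d = 0 -> exists k, z = k * d)
    by (intros z Hz; apply Z.mod_divide in Hz; [exact Hz | lia]).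
  destruct (Hdiv (snd b2)) as [k1 E1]; [lia|].
  destruct (Hdiv (- snd b1)) as [k2 E2]; [lia|].
  destruct (Hdiv (- fst b2)) as [k3 E3]; [lia|].
  destruct (Hdiv (fst b1)) as [k4 E4]; [lia|].
  assert (Ed : d = d * d * (k4 * k1 - k2 * k3)) by (unfold d at 1, det; nia).
  assert (Hone : d * (k4 * k1 - k2 * k3) = 1) by nia.
  destruct (Z_le_gt_dec (k4 * k1 - k2 * k3) 0); nia.
Qed.

Lemma parallelogram_point b1 b2 : 2 <= det b1 b2 -> exists p s1 s2,
  0 <= s1 < det b1 b2 /\ 0 <= s2 < det b1 b2 /\ 0 < s1 + s2 <= det b1 b2 /\
  det b1 b2 * fst p = s1 * fst b1 + s2 * fst b2 /\
  det b1 b2 * snd p = s1 * snd b1 + s2 * snd b2.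
Proof.
  intros Hd; destruct (unit_vector_off_lattice b1 b2 Hd) as [e He].
  destruct (lattice_reduce b1 b2 e ltac:(lia)) as [p [E1 E2]].
  pose proof (Z.mod_pos_bound (det e b2) (det b1 b2) ltac:(lia)).
  pose proof (Z.mod_pos_bound (det b1 e) (det b1 b2) ltac:(lia)).
  set (d := det b1 b2) in *; set (r1 := det e b2 mod d) in *; set (r2 := det b1 e mod d) in *.
  destruct (Z_le_gt_dec (r1 + r2) d).
  - exists p, r1, r2; repeat split; lia.
  - exists (fst b1 + fst b2 - fst p, snd b1 + snd b2 - snd p), (d - r1), (d - r2).
    cbn [fst snd]; repeat split; lia.
Qed.

Lemma triple_bound_descent V c1 c2 c3 p m u1 u2 u3 :
  V <> nil -> lincomb3 m p u1 c1 u2 c2 u3 c3 ->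
  0 <= u1 -> 0 <= u2 -> 0 < u3 < m -> u1 + u2 + u3 <= m ->
  pos_triple c1 c2 c3 -> det c1 c2 < tri_weight c1 c2 c3 ->
  p <> (0, 0) -> 0 <= det c2 p -> 0 <= det p c1 ->
  (forall b1 b2 b3, pos_triple b1 b2 b3 -> tri_weight b1 b2 b3 < tri_weight c1 c2 c3 ->
     triple_bound V b1 b2 b3) ->
  triple_bound V c1 c2 c3.
Proof.
  intros HV Hp H1 H2 H3 Hm [N1 [N2 [_ [_ [_ [D3 Hw]]]]]] Hlt Np Dp1 Dp2 IH.
  apply (triple_bound_replace V c1 c2 c3 p m u1 u2 u3); auto; try lia.
  pose proof (tri_weight_lincomb3 _ _ _ _ _ _ _ _ Hp) as EW.
  assert (0 <= (m - u1 - u2 - u3) * det c1 c2) by (apply Z.mul_nonneg_nonneg; lia).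
  assert ((m - u1 - u2 - u3) * det c1 c2 <= (m - u3) * det c1 c2)
    by (apply Z.mul_le_mono_nonneg_r; lia).
  assert ((m - u3) * det c1 c2 < (m - u3) * tri_weight c1 c2 c3)
    by (apply Z.mul_lt_mono_pos_l; lia).
  apply IH; [repeat split; auto; nia | nia].
Qed.

Lemma triple_bound_step V b1 b2 b3 :
  V <> nil -> pos_triple b1 b2 b3 -> 0 < det b2 b3 -> 0 < det b3 b1 -> 2 <= det b1 b2 ->
  (forall c1 c2 c3, pos_triple c1 c2 c3 -> tri_weight c1 c2 c3 < tri_weight b1 b2 b3 ->
     triple_bound V c1 c2 c3) ->
  triple_bound V b1 b2 b3.
Proof.
  intros HV Hb D1 D2 D3 IH.
  destruct (parallelogram_point b1 b2 D3) as [p [s1 [s2 [S1 [S2 [S [E1 E2]]]]]]].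
  (* [det b1 b2 * det p b3 = s2 * det b2 b3 - s1 * det b3 b1]: the side of the line
     [R b3] on which [p] lies decides whether [p] replaces [b2] or [b1]. *)
  destruct (Z_le_gt_dec 0 (s2 * det b2 b3 - s1 * det b3 b1)) as [HX|HX].
  - assert (Hp : lincomb3 (det b1 b2) p 0 b3 s1 b1 s2 b2) by (split; lia).
    pose proof (det_lincomb3_l _ _ _ _ _ _ _ _ b1 Hp) as F1.
    pose proof (det_lincomb3_r _ _ _ _ _ _ _ _ b3 Hp) as F2.
    rewrite det_vv in F1; rewrite (det_swap b1 b3) in F2.
    assert (Hs2 : 0 < s2) by nia.
    assert (Dp1 : det b1 p = s2) by nia.
    assert (Dp2 : 0 <= det p b3) by nia.
    apply triple_bound_rot, triple_bound_rot.
    apply (triple_bound_descent V b3 b1 b2 p (det b1 b2) 0 s1 s2 HV Hp);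
      try (unfold tri_weight; lia).
    + apply pos_triple_rot, pos_triple_rot, Hb.
    + apply (det_nz_r b1); lia.
    + rewrite (tri_weight_rot b2 b3 b1), (tri_weight_rot b1 b2 b3); exact IH.
  - assert (Hp : lincomb3 (det b1 b2) p s2 b2 0 b3 s1 b1) by (split; lia).
    pose proof (det_lincomb3_l _ _ _ _ _ _ _ _ b3 Hp) as F1.
    pose proof (det_lincomb3_r _ _ _ _ _ _ _ _ b2 Hp) as F2.
    rewrite det_vv in F2; rewrite (det_swap b3 b2) in F1.
    assert (Hs1 : 0 < s1) by nia.
    assert (Dp1 : 0 <= det b3 p) by nia.
    assert (Dp2 : det p b2 = s1) by nia.
    apply triple_bound_rot.
    apply (triple_bound_descent V b2 b3 b1 p (det b1 b2) s2 0 s1 HV Hp);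
      try (unfold tri_weight; lia).
    + apply pos_triple_rot, Hb.
    + apply (det_nz_l _ b2); lia.
    + rewrite (tri_weight_rot b1 b2 b3); exact IH.
Qed.

Theorem triple_bound_pos_triple V b1 b2 b3 :
  V <> nil -> pos_triple b1 b2 b3 -> triple_bound V b1 b2 b3.
Proof.
  intros HV.
  remember (Z.to_nat (tri_weight b1 b2 b3)) as n eqn:En.
  revert b1 b2 b3 En; induction n as [n IH] using lt_wf_ind; intros b1 b2 b3 En Hb.
  assert (IHw : forall c1 c2 c3, pos_triple c1 c2 c3 ->
            tri_weight c1 c2 c3 < tri_weight b1 b2 b3 -> triple_bound V c1 c2 c3).
  { intros c1 c2 c3 Hc Hlt; pose proof Hc as (_ & _ & _ & _ & _ & _ & Hw).
    apply (IH (Z.to_nat (tri_weight c1 c2 c3))); [lia | reflexivity | exact Hc]. }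
  pose proof Hb as (_ & _ & _ & D1 & D2 & D3 & _).
  assert (IHrot : forall c1 c2 c3, pos_triple c1 c2 c3 ->
            tri_weight c1 c2 c3 < tri_weight b2 b3 b1 -> triple_bound V c1 c2 c3)
    by (rewrite (tri_weight_rot b1 b2 b3); exact IHw).
  assert (IHrot2 : forall c1 c2 c3, pos_triple c1 c2 c3 ->
            tri_weight c1 c2 c3 < tri_weight b3 b1 b2 -> triple_bound V c1 c2 c3)
    by (rewrite (tri_weight_rot b2 b3 b1), (tri_weight_rot b1 b2 b3); exact IHw).
  destruct (Z.eq_dec (det b2 b3) 0) as [Z1|].
  { apply triple_bound_degenerate; auto. }
  destruct (Z.eq_dec (det b3 b1) 0) as [Z2|].
  { apply triple_bound_rot, triple_bound_degenerate; auto using pos_triple_rot. }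
  destruct (Z.eq_dec (det b1 b2) 0) as [Z3|].
  { apply triple_bound_rot, triple_bound_rot, triple_bound_degenerate;
      auto using pos_triple_rot. }
  destruct (Z_le_gt_dec 2 (det b1 b2)).
  { apply triple_bound_step; auto; lia. }
  destruct (Z_le_gt_dec 2 (det b2 b3)).
  { apply triple_bound_rot, triple_bound_step; auto using pos_triple_rot; lia. }
  destruct (Z_le_gt_dec 2 (det b3 b1)).
  { apply triple_bound_rot, triple_bound_rot, triple_bound_step;
      auto using pos_triple_rot; lia. }
  apply triple_bound_unimodular; lia.
Qed.
End LatticeCombinatorics.

Lemma pairing_to_pt a u : pairing a (to_pt u) = IZR (dot a u).
Proof. unfold pairing, to_pt, dot; rewrite plus_IZR, !mult_IZR; reflexivity. Qed.

Lemma pairing_vopp a x : pairing (vopp a) x = - pairing a x.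
Proof. unfold pairing, vopp; cbn [fst snd]; rewrite !opp_IZR; ring. Qed.

Lemma pairing_vadd a b x : pairing (vadd a b) x = pairing a x + pairing b x.
Proof. unfold pairing, vadd; cbn [fst snd]; rewrite !plus_IZR; ring. Qed.

Definition translate (x : pt) (t : R) (v : lpt) : pt :=
  (fst x + t * IZR (fst v), snd x + t * IZR (snd v)).

Lemma pairing_translate a x t v :
  pairing a (translate x t v) = pairing a x + t * IZR (dot a v).
Proof. unfold pairing, translate, dot; cbn [fst snd]; rewrite plus_IZR, !mult_IZR; ring. Qed.

Lemma conv_vertex V u : In u V -> conv V (to_pt u).
Proof.
  intros Hu; exists ((u, 1) :: nil); split; [|split].
  - constructor; [split; [exact Hu | simpl; lra] | constructor].
  - simpl; ring.
  - unfold to_pt; simpl; f_equal; ring.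
Qed.

Lemma conv_pairing_ge V a y : conv V y -> IZR (support V a) <= pairing a y.
Proof.
  intros [c [Hc [Hsum ->]]].
  enough (IZR (support V a) * fold_right (fun p acc => snd p + acc) 0 c <=
          pairing a (fold_right (fun p acc => (snd p * IZR (fst (fst p)) + fst acc,
                                               snd p * IZR (snd (fst p)) + snd acc)) (0, 0) c))
    by (rewrite Hsum in *; lra).
  clear Hsum; induction Hc as [|[u l] c [Hu Hl] _ IH]; cbn [fold_right fst snd] in *.
  - unfold pairing; cbn; lra.
  - pose proof (IZR_le _ _ (support_le V a u Hu)).
    unfold pairing, dot in *; cbn [fst snd] in *; rewrite plus_IZR, !mult_IZR in *.
    nra.
Qed.

Lemma is_hP_conv V a h : V <> nil -> is_hP (conv V) a h <-> h = IZR (support V a).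
Proof.
  intros HV; destruct (support_attained V a HV) as [u [Hu Eu]]; split.
  - intros [[y [Hy <-]] Hmin].
    pose proof (conv_pairing_ge V a y Hy).
    pose proof (Hmin _ (conv_vertex V u Hu)); rewrite pairing_to_pt, <- Eu in *; lra.
  - intros ->; split.
    + exists (to_pt u); split; [apply conv_vertex, Hu | rewrite pairing_to_pt, Eu; reflexivity].
    + intros y; apply conv_pairing_ge.
Qed.

Definition slack (V : list lpt) (a : lpt) (x : pt) : R := pairing a x - IZR (support V a).

Lemma fine_adjoint_conv V s x : V <> nil ->
  fine_adjoint (conv V) s x <-> forall a, a <> (0%Z, 0%Z) -> s <= slack V a x.
Proof.
  intros HV; unfold fine_adjoint, slack; split.
  - intros H a Ha; specialize (H a Ha _ (proj2 (is_hP_conv V a _ HV) eq_refl)); lra.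
  - intros H a Ha h Hh; apply (is_hP_conv V a h HV) in Hh; specialize (H a Ha); lra.
Qed.

Lemma slack_translate V a x t v :
  slack V a (translate x t v) = slack V a x + t * IZR (dot a v).
Proof. unfold slack; rewrite pairing_translate; ring. Qed.

Lemma slack_width V b x : slack V b x + slack V (vopp b) x = IZR (width V b).
Proof. unfold slack, width; rewrite pairing_vopp, !minus_IZR, opp_IZR; ring. Qed.

Lemma slack_tri_width V a1 a2 x :
  slack V a1 x + slack V a2 x + slack V (vopp (vadd a1 a2)) x = IZR (tri_width V a1 a2).
Proof.
  unfold slack, tri_width; rewrite pairing_vopp, pairing_vadd, !minus_IZR, opp_IZR; ring.
Qed.

Lemma slack_cramer V b1 b2 b3 x :
  IZR (det b2 b3) * slack V b1 x + IZR (det b3 b1) * slack V b2 x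
  + IZR (det b1 b2) * slack V b3 x = IZR (tri_value V b1 b2 b3).
Proof.
  assert (E : IZR (det b2 b3) * pairing b1 x + IZR (det b3 b1) * pairing b2 x
              + IZR (det b1 b2) * pairing b3 x = 0).
  { unfold pairing.
    transitivity (IZR (det b2 b3 * fst b1 + det b3 b1 * fst b2 + det b1 b2 * fst b3) * fst x
                  + IZR (det b2 b3 * snd b1 + det b3 b1 * snd b2 + det b1 b2 * snd b3) * snd x);
      [rewrite !plus_IZR, !mult_IZR; ring|].
    rewrite cramer_fst, cramer_snd; ring. }
  unfold slack, tri_value; rewrite opp_IZR, !plus_IZR, !mult_IZR; lra.
Qed.

Lemma fine_adjoint_obstruction V K s x :
  V <> nil -> fine_adjoint (conv V) s x -> obstruction V K -> 6 * s <= IZR K.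
Proof.
  intros HV Hx HK; rewrite (fine_adjoint_conv V s x HV) in Hx.
  destruct HK as [[b [Hb ->]]|[a1 [a2 [Hd ->]]]]; rewrite mult_IZR.
  - pose proof (Hx b Hb); pose proof (Hx (vopp b) (vopp_nz b Hb)).
    pose proof (slack_width V b x); lra.
  - pose proof (Hx a1 (det_nz_l _ _ Hd)); pose proof (Hx a2 (det_nz_r _ _ Hd)).
    pose proof (Hx _ (vopp_vadd_nz _ _ Hd)); pose proof (slack_tri_width V a1 a2 x); lra.
Qed.

Lemma exists_pairing_eq2 a1 a2 r1 r2 :
  det a1 a2 <> 0%Z -> exists x, pairing a1 x = r1 /\ pairing a2 x = r2.
Proof.
  intros Hd; apply not_0_IZR in Hd.
  exists ((r1 * IZR (snd a2) - r2 * IZR (snd a1)) / IZR (det a1 a2),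
          (r2 * IZR (fst a1) - r1 * IZR (fst a2)) / IZR (det a1 a2)).
  unfold pairing; cbn [fst snd].
  replace (IZR (det a1 a2)) with (IZR (fst a1) * IZR (snd a2) - IZR (snd a1) * IZR (fst a2))
    in * by (unfold det; rewrite minus_IZR, !mult_IZR; reflexivity).
  split; field; exact Hd.
Qed.

Lemma real_separation (L U : R -> Prop) :
  (exists l, L l) -> (exists u, U u) -> (forall l u, L l -> U u -> l <= u) ->
  exists t, (forall l, L l -> l <= t) /\ (forall u, U u -> t <= u).
Proof.
  intros HL [u0 Hu0] HLU.
  destruct (completeness L (ex_intro _ u0 (fun l Hl => HLU l u0 Hl Hu0)) HL) as [t [Ht1 Ht2]].
  exists t; split; [exact Ht1|]; intros u Hu; apply Ht2; intros l Hl; exact (HLU l u Hl Hu).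
Qed.

Section AdjointPoint.

Variables (V : list lpt) (K : Z).
Hypothesis HV : V <> nil.
Hypothesis HK : least_obstruction V K.

Lemma weighted_slack_ge b1 b2 b3 x : pos_triple b1 b2 b3 ->
  IZR (tri_weight b1 b2 b3) * (IZR K / 6) <=
  IZR (det b2 b3) * slack V b1 x + IZR (det b3 b1) * slack V b2 x
  + IZR (det b1 b2) * slack V b3 x.
Proof.
  intros Hb; destruct (triple_bound_pos_triple V b1 b2 b3 HV Hb) as [K' [HK' Hle]].
  pose proof Hb as (_ & _ & _ & _ & _ & _ & Hw).
  assert (K * tri_weight b1 b2 b3 <= K' * tri_weight b1 b2 b3)%Z
    by (apply Z.mul_le_mono_nonneg_r; [lia | exact (proj2 HK K' HK')]).
  assert (Hle' : (K * tri_weight b1 b2 b3 <= 6 * tri_value V b1 b2 b3)%Z) by lia.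
  apply IZR_le in Hle'; rewrite !mult_IZR in Hle'.
  rewrite slack_cramer; lra.
Qed.

Lemma slack_ge_in_cone a b1 b2 x :
  a <> (0%Z, 0%Z) -> b1 <> (0%Z, 0%Z) -> b2 <> (0%Z, 0%Z) ->
  (0 < det b1 b2)%Z -> (0 <= det b2 a)%Z -> (0 <= det a b1)%Z ->
  slack V b1 x = IZR K / 6 -> slack V b2 x = IZR K / 6 -> IZR K / 6 <= slack V a x.
Proof.
  intros Ha Hb1 Hb2 Hd Hd1 Hd2 E1 E2.
  assert (Hb : pos_triple a b1 b2) by (repeat split; auto; unfold tri_weight; lia).
  pose proof (weighted_slack_ge a b1 b2 x Hb) as H.
  apply IZR_lt in Hd; unfold tri_weight in H; rewrite E1, E2, !plus_IZR in H; nra.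
Qed.

Lemma slack_ge_parallel a b x :
  a <> (0%Z, 0%Z) -> b <> (0%Z, 0%Z) -> det b a = 0%Z ->
  slack V b x = IZR K / 6 -> slack V (vopp b) x = IZR K / 6 -> IZR K / 6 <= slack V a x.
Proof.
  intros Ha Hb Hd E1 E2.
  (* In the triple [a, b', perp b'] the weight of [perp b'] is [det a b' = 0]. *)
  assert (Hc : forall b', b' <> (0%Z, 0%Z) -> det b' a = 0%Z -> (dot b' a < 0)%Z ->
                 slack V b' x = IZR K / 6 -> IZR K / 6 <= slack V a x).
  { intros b' Hb' Hd' Hdot E; pose proof (dot_self_pos b' Hb').
    assert (Ht : pos_triple a b' (perp b')).
    { repeat split; auto using perp_nz; unfold tri_weight;
        rewrite ?det_perp_l, ?det_perp_r, ?(det_swap a b'), ?Hd'; lia. }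
    pose proof (weighted_slack_ge a b' (perp b') x Ht) as Hw.
    unfold tri_weight in Hw; rewrite det_perp_l, det_perp_r, (det_swap a), Hd', E in Hw.
    apply IZR_lt in Hdot; rewrite !plus_IZR, opp_IZR in Hw; simpl IZR in Hw.
    assert (0 < IZR (dot b' b')) by (apply IZR_lt; lia).
    nra. }
  assert (Hdot : dot b a <> 0%Z).
  { intros Hdot; apply Ha.
    destruct a as [a1 a2], b as [b1 b2]; unfold dot, det in *; cbn [fst snd] in *.
    pose proof (dot_self_pos (b1, b2) Hb); unfold dot in *; cbn [fst snd] in *.
    f_equal; nia. }
  destruct (Z_lt_le_dec (dot b a) 0).
  - exact (Hc b Hb Hd ltac:(lia) E1).
  - apply (Hc (vopp b)); auto using vopp_nz; rewrite ?det_vopp_l, ?dot_vopp_l; lia.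
Qed.

Lemma adjoint_point_tri a1 a2 :
  (0 < det a1 a2)%Z -> K = (2 * tri_width V a1 a2)%Z ->
  exists x, forall a, a <> (0%Z, 0%Z) -> IZR K / 6 <= slack V a x.
Proof.
  intros Hd EK; set (a3 := vopp (vadd a1 a2)).
  assert (N1 : a1 <> (0%Z, 0%Z)) by (apply (det_nz_l a1 a2); lia).
  assert (N2 : a2 <> (0%Z, 0%Z)) by (apply (det_nz_r a1 a2); lia).
  assert (N3 : a3 <> (0%Z, 0%Z)) by (apply vopp_vadd_nz; lia).
  destruct (exists_pairing_eq2 a1 a2 (IZR (support V a1) + IZR K / 6)
              (IZR (support V a2) + IZR K / 6) ltac:(lia)) as [x [E1 E2]].
  assert (S1 : slack V a1 x = IZR K / 6) by (unfold slack; lra).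
  assert (S2 : slack V a2 x = IZR K / 6) by (unfold slack; lra).
  assert (S3 : slack V a3 x = IZR K / 6).
  { pose proof (slack_tri_width V a1 a2 x) as H; fold a3 in H.
    rewrite EK, mult_IZR in *; lra. }
  assert (D23 : det a2 a3 = det a1 a2) by (unfold a3, det, vopp, vadd; cbn [fst snd]; ring).
  assert (D31 : det a3 a1 = det a1 a2) by (unfold a3, det, vopp, vadd; cbn [fst snd]; ring).
  exists x; intros a Ha.
  assert (Es : (det a a1 + det a a2 + det a a3 = 0)%Z)
    by (unfold a3, det, vopp, vadd; cbn [fst snd]; ring).
  pose proof (det_swap a1 a); pose proof (det_swap a2 a); pose proof (det_swap a3 a).
  destruct (Z_le_gt_dec 0 (det a a3)).
  - destruct (Z_le_gt_dec (det a a1) 0).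
    + apply (slack_ge_in_cone a a3 a1 x); auto; lia.
    + apply (slack_ge_in_cone a a1 a2 x); auto; lia.
  - destruct (Z_le_gt_dec 0 (det a a2)).
    + apply (slack_ge_in_cone a a2 a3 x); auto; lia.
    + apply (slack_ge_in_cone a a1 a2 x); auto; lia.
Qed.

Lemma slack_excess_opposite a a' b x :
  (0 < det b a)%Z -> (det b a' < 0)%Z ->
  slack V b x = IZR K / 6 -> slack V (vopp b) x = IZR K / 6 ->
  0 <= - IZR (det b a') * (slack V a x - IZR K / 6)
       + IZR (det b a) * (slack V a' x - IZR K / 6).
Proof.
  intros Hp Hq E E'; assert (Hb : b <> (0%Z, 0%Z)) by (apply (det_nz_l b a); lia).
  destruct (Z_le_gt_dec 0 (det a a')).
  - assert (Ht : pos_triple a a' b).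
    { repeat split; try (apply (det_nz_r b); lia); auto; unfold tri_weight;
        rewrite ?(det_swap a' b); lia. }
    pose proof (weighted_slack_ge a a' b x Ht) as H; unfold tri_weight in H.
    rewrite (det_swap a' b), E, !plus_IZR, opp_IZR in H; lra.
  - assert (Ht : pos_triple a' a (vopp b)).
    { repeat split; try (apply (det_nz_r b); lia); auto using vopp_nz; unfold tri_weight;
        rewrite ?(det_swap a (vopp b)), ?det_vopp_l, ?(det_swap a' a); lia. }
    pose proof (weighted_slack_ge a' a (vopp b) x Ht) as H; unfold tri_weight in H.
    rewrite (det_swap a (vopp b)), !det_vopp_l, (det_swap a' a), E', !plus_IZR, !opp_IZR in H.
    lra.
Qed.

(** On the line through [x0] parallel to [perp b] the slack of [a] moves with speed
    [det b a]: directions with [det b a > 0] bound the parameter [t] from below, those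
    with [det b a < 0] from above, and [slack_excess_opposite] says the bounds are
    compatible. *)
Lemma adjoint_point_midline b x0 :
  b <> (0%Z, 0%Z) -> slack V b x0 = IZR K / 6 -> slack V (vopp b) x0 = IZR K / 6 ->
  exists x, forall a, a <> (0%Z, 0%Z) -> IZR K / 6 <= slack V a x.
Proof.
  intros Hb S0 S0'; set (c := IZR K / 6) in *.
  pose proof (dot_self_pos b Hb) as Hbb.
  set (L := fun y => exists a, (0 < det b a)%Z /\ y * IZR (det b a) = c - slack V a x0).
  set (U := fun y => exists a, (det b a < 0)%Z /\ y * IZR (det b a) = c - slack V a x0).
  assert (Hsol : forall a, det b a <> 0%Z -> exists y, y * IZR (det b a) = c - slack V a x0)
    by (intros a Ha; apply not_0_IZR in Ha; exists ((c - slack V a x0) / IZR (det b a));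
        field; exact Ha).
  assert (Hperp : (0 < det b (perp b))%Z) by (rewrite det_perp_l; lia).
  assert (Hperp' : (det b (vopp (perp b)) < 0)%Z)
    by (rewrite (det_swap b), det_vopp_l, <- det_swap; lia).
  destruct (real_separation L U) as [t [Ht1 Ht2]].
  - destruct (Hsol (perp b)) as [y Hy]; [lia|]; exists y, (perp b); auto.
  - destruct (Hsol (vopp (perp b))) as [y Hy]; [lia|]; exists y, (vopp (perp b)); auto.
  - intros l u [a [Hp El]] [a' [Hq Eu]].
    pose proof (slack_excess_opposite a a' b x0 Hp Hq S0 S0') as H; fold c in H.
    apply IZR_lt in Hp, Hq.
    replace (slack V a x0 - c) with (- (l * IZR (det b a))) in H by lra.
    replace (slack V a' x0 - c) with (- (u * IZR (det b a'))) in H by lra.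
    assert (Hpq : IZR (det b a) * IZR (det b a') < 0) by nra.
    nra.
  - exists (translate x0 t (perp b)); intros a Ha; rewrite slack_translate, dot_perp.
    destruct (Z.lt_total 0 (det b a)) as [Hp|[Hz|Hq]].
    + destruct (Hsol a) as [y Hy]; [lia|].
      assert (y <= t) by (apply Ht1; exists a; split; assumption).
      apply IZR_lt in Hp; nra.
    + rewrite <- Hz, Rmult_0_r, Rplus_0_r; apply (slack_ge_parallel a b x0); auto.
    + destruct (Hsol a) as [y Hy]; [lia|].
      assert (t <= y) by (apply Ht2; exists a; split; assumption).
      apply IZR_lt in Hq; nra.
Qed.

Lemma adjoint_point_width b :
  b <> (0%Z, 0%Z) -> K = (3 * width V b)%Z ->
  exists x, forall a, a <> (0%Z, 0%Z) -> IZR K / 6 <= slack V a x.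
Proof.
  intros Hb EK; pose proof (dot_self_pos b Hb).
  destruct (exists_pairing_eq2 b (perp b) (IZR (support V b) + IZR K / 6) 0)
    as [x0 [E0 _]]; [rewrite det_perp_l; lia|].
  apply (adjoint_point_midline b x0 Hb); [unfold slack; lra|].
  pose proof (slack_width V b x0); rewrite EK, mult_IZR in *; unfold slack in *; lra.
Qed.

Lemma adjoint_point : exists x, fine_adjoint (conv V) (IZR K / 6) x.
Proof.
  enough (exists x, forall a, a <> (0%Z, 0%Z) -> IZR K / 6 <= slack V a x)
    as [x Hx] by (exists x; apply fine_adjoint_conv; assumption).
  destruct (proj1 HK) as [[b [Hb EK]]|[a1 [a2 [Hd EK]]]].
  - exact (adjoint_point_width b Hb EK).
  - destruct (Z_lt_le_dec 0 (det a1 a2)).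
    + exact (adjoint_point_tri a1 a2 ltac:(lia) EK).
    + apply (adjoint_point_tri a2 a1); [rewrite det_swap; lia|].
      rewrite EK; unfold tri_width, vadd; rewrite (Z.add_comm (fst a2)), (Z.add_comm (snd a2)).
      lia.
Qed.

End AdjointPoint.

Lemma fine_codegree_max P c mu :
  0 < c -> (exists x, fine_adjoint P c x) ->
  (forall s x, 0 < s -> fine_adjoint P s x -> s <= c) ->
  fine_codegree P mu <-> mu = / c.
Proof.
  intros Hc Hx Hmax.
  assert (Hlub : is_lub (fun s => 0 < s /\ exists x, fine_adjoint P s x) c).
  { split.
    - intros s [Hs [x Hsx]]; exact (Hmax s x Hs Hsx).
    - intros b Hb; apply Hb; split; assumption. }
  split.
  - intros [sigma [Hs ->]]; rewrite (is_lub_u _ _ _ Hs Hlub); reflexivity.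
  - intros ->; exists c; split; [exact Hlub | reflexivity].
Qed.

Lemma fine_codegree_conv V K mu :
  full_dim2 V -> least_obstruction V K -> fine_codegree (conv V) mu <-> mu = 6 / IZR K.
Proof.
  intros HF HK; pose proof (full_dim2_nonempty V HF) as HV.
  pose proof (IZR_le _ _ (obstruction_pos V K HF (proj1 HK))).
  rewrite (fine_codegree_max (conv V) (IZR K / 6) mu).
  - split; intros ->; field; lra.
  - lra.
  - exact (adjoint_point V K HV HK).
  - intros s x _ Hx; pose proof (fine_adjoint_obstruction V K s x HV Hx (proj1 HK)); lra.
Qed.

Lemma fine_spectrum2_witness V K x :
  full_dim2 V -> obstruction V K ->
  (forall a, a <> (0%Z, 0%Z) -> IZR K / 6 <= slack V a x) -> fine_spectrum2 (6 / IZR K).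
Proof.
  intros HF HK Hx; pose proof (full_dim2_nonempty V HF) as HV.
  pose proof (IZR_le _ _ (obstruction_pos V K HF HK)).
  exists V; split; [exact HF|].
  apply (fine_codegree_max (conv V) (IZR K / 6)).
  - lra.
  - exists x; apply fine_adjoint_conv; assumption.
  - intros s y _ Hy; pose proof (fine_adjoint_obstruction V K s y HV Hy HK); lra.
  - field; lra.
Qed.

Lemma full_dim2_corner (k : Z) l :
  (0 < k)%Z -> full_dim2 ((0, 0) :: (k, 0) :: (0, k) :: l)%Z.
Proof. intros Hk; exists (0, 0)%Z, (k, 0)%Z, (0, k)%Z; cbn; repeat split; auto; nia. Qed.

Lemma square_in_spectrum (k : Z) : (0 < k)%Z -> fine_spectrum2 (6 / IZR (3 * k)).
Proof.
  intros Hk; set (V := ((0, 0) :: (k, 0) :: (0, k) :: (k, k) :: nil)%Z).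
  apply (fine_spectrum2_witness V _ (IZR k / 2, IZR k / 2)).
  - apply full_dim2_corner, Hk.
  - left; exists (1, 0)%Z; split; [discriminate|].
    unfold width, support, V, dot, vopp; cbn [fold_right fst snd]; lia.
  - intros [a1 a2] Ha.
    pose proof (support_le V (a1, a2) (0, 0)%Z ltac:(cbn; tauto)).
    pose proof (support_le V (a1, a2) (k, 0)%Z ltac:(cbn; tauto)).
    pose proof (support_le V (a1, a2) (0, k)%Z ltac:(cbn; tauto)).
    pose proof (support_le V (a1, a2) (k, k)%Z ltac:(cbn; tauto)).
    unfold dot in *; cbn [fst snd] in *; set (h := support V (a1, a2)) in *.
    assert (Hint : (2 * h + k <= k * (a1 + a2))%Z).
    { assert (a1 <> 0%Z \/ a2 <> 0%Z)
        by (destruct (Z.eq_dec a1 0), (Z.eq_dec a2 0); subst; auto).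
      destruct (Z_le_gt_dec 0 a1), (Z_le_gt_dec 0 a2); nia. }
    apply IZR_le in Hint; rewrite plus_IZR, !mult_IZR, plus_IZR in Hint.
    unfold slack, pairing; cbn [fst snd]; fold h; rewrite mult_IZR; lra.
Qed.

Lemma triangle_in_spectrum (k : Z) : (0 < k)%Z -> fine_spectrum2 (6 / IZR (2 * k)).
Proof.
  intros Hk; set (V := ((0, 0) :: (k, 0) :: (0, k) :: nil)%Z).
  apply (fine_spectrum2_witness V _ (IZR k / 3, IZR k / 3)).
  - apply full_dim2_corner, Hk.
  - right; exists (1, 0)%Z, (0, 1)%Z; split; [discriminate|].
    unfold tri_width, support, V, dot, vopp, vadd; cbn [fold_right fst snd]; lia.
  - intros [a1 a2] Ha.
    pose proof (support_le V (a1, a2) (0, 0)%Z ltac:(cbn; tauto)).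
    pose proof (support_le V (a1, a2) (k, 0)%Z ltac:(cbn; tauto)).
    pose proof (support_le V (a1, a2) (0, k)%Z ltac:(cbn; tauto)).
    unfold dot in *; cbn [fst snd] in *; set (h := support V (a1, a2)) in *.
    assert (Hint : (3 * h + k <= k * (a1 + a2))%Z).
    { assert (a1 <> 0%Z \/ a2 <> 0%Z)
        by (destruct (Z.eq_dec a1 0), (Z.eq_dec a2 0); subst; auto).
      destruct (Z_le_gt_dec 0 a1), (Z_le_gt_dec 0 a2); try nia;
        destruct (Z_le_gt_dec a1 a2); nia. }
    apply IZR_le in Hint; rewrite plus_IZR, !mult_IZR, plus_IZR in Hint.
    unfold slack, pairing; cbn [fst snd]; fold h; rewrite mult_IZR; lra.
Qed.

Theorem mainTheorem6 (mu : R) :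
  fine_spectrum2 mu <->
  exists k : nat, (0 < k)%nat /\ (mu = 2 / INR k \/ mu = 3 / INR k).
Proof.
  split.
  - intros [V [HF Hmu]].
    destruct (least_obstruction_exists V HF) as [K HK].
    apply (fine_codegree_conv V K mu HF HK) in Hmu; subst mu.
    pose proof (obstruction_pos V K HF (proj1 HK)).
    destruct (proj1 HK) as [[b [_ EK]]|[a1 [a2 [_ EK]]]]; subst K.
    + exists (Z.to_nat (width V b)); split; [lia|]; left.
      rewrite INR_IZR_INZ, Z2Nat.id, mult_IZR by lia; field.
      apply not_0_IZR; lia.
    + exists (Z.to_nat (tri_width V a1 a2)); split; [lia|]; right.
      rewrite INR_IZR_INZ, Z2Nat.id, mult_IZR by lia; field.
      apply not_0_IZR; lia.
  - intros [k [Hk [-> | ->]]]; rewrite INR_IZR_INZ.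
    + replace (2 / IZR (Z.of_nat k)) with (6 / IZR (3 * Z.of_nat k)).
      * apply square_in_spectrum; lia.
      * rewrite mult_IZR; field; apply not_0_IZR; lia.
    + replace (3 / IZR (Z.of_nat k)) with (6 / IZR (2 * Z.of_nat k)).
      * apply triangle_in_spectrum; lia.
      * rewrite mult_IZR; field; apply not_0_IZR; lia.
Qed.
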